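(* Let $S=(P,L)$ be a $(2,2)$-generalized quadrangle and let $(R,\psi)$ be a faithful representation of $S$ with $\psi(x)=\langle r_x\rangle$ and $|R|=2^4$. Let $a,b,c$ be three distinct points of $S$ with $r_ar_br_c=1$. Then $\{a,b,c\}$ is either a line or a complete $3$-arc of $S$.
   Context: A $(2,t)$-generalized quadrangle is a partial linear space in which every line has exactly $3$ points, every point lies on exactly $t+1$ lines, no point is collinear with all points, and for every point $x$ and line $\ell$ with $x\notin\ell$, $x$ is collinear with exactly one point of $\ell$. A $k$-arc is a set of $k$ pairwise non-collinear points; it is complete if it is not contained in a $(k+1)$-arc. A representation $(R,\psi)$ of $S$ is a group $R$ with a map $\psi$ assigning to each point $x$ a subgroup $\psi(x)=\langle r_x\rangle$ of order $2$, such that $R$ is generated by the $r_x$ and, for every line $\{x,y,z\}$, $\{1,r_x,r_y,r_z\}$ is a Klein four subgroup. It is faithful if $\psi$ is injective. *)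

From mathcomp Require Import all_boot all_order all_fingroup.
Set Implicit Arguments. Unset Strict Implicit. Unset Printing Implicit Defensive.

Section GQ.
Variable P : finType.
Variable L : {set {set P}}.

(* x and y are collinear: some line contains both (a point is collinear with itself
   as soon as it lies on a line). *)
Definition collinear (x y : P) : bool := [exists l in L, (x \in l) && (y \in l)].

Definition partial_linear_space : Prop :=
  (forall l, l \in L -> 2 <= #|l|) /\
  (forall x y l m, x != y -> l \in L -> m \in L ->
      x \in l -> y \in l -> x \in m -> y \in m -> l = m).

Definition is_GQ2 (t : nat) : Prop :=
  [/\ partial_linear_space,
      (forall l, l \in L -> #|l| = 3),
      (forall x, #|[set l in L | x \in l]| = t.+1),
      (forall x, exists y, ~~ collinear x y) &
      (forall x l, l \in L -> x \notin l -> #|[set y in l | collinear x y]| = 1)].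

Definition arc (A : {set P}) : bool :=
  [forall x in A, forall y in A, (x != y) ==> ~~ collinear x y].

Definition karc (k : nat) (A : {set P}) : bool := arc A && (#|A| == k).

Definition complete_karc (k : nat) (A : {set P}) : bool :=
  karc k A && ~~ [exists B : {set P}, karc k.+1 B && (A \subset B)].
End GQ.

Definition klein_four (gT : finGroupType) (A : {set gT}) : bool :=
  [&& group_set A, #|A| == 4 & [forall g in A, g ^+ 2 == 1]]%g.

(* (R, psi) with psi(x) = <r x> is a representation of (P, L) *)
Definition representation (P : finType) (L : {set {set P}}) (gT : finGroupType)
  (R : {group gT}) (r : P -> gT) : Prop :=
  [/\ (forall x, #|<[r x]>%g| = 2),
      <<[set r x | x : P]>>%g = R &
      (forall x y z, [set x; y; z] \in L -> x != y -> y != z -> x != z ->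
         klein_four [set 1%g; r x; r y; r z])].

Definition faithful_rep (P : finType) (gT : finGroupType) (r : P -> gT) : Prop :=
  injective (fun x => <[r x]>%g).

From Pilot Require Import Defs.
From mathcomp Require Import all_boot all_order all_fingroup.
Set Implicit Arguments. Unset Strict Implicit. Unset Printing Implicit Defensive.

(* On a line {x, y, z} the Klein four condition forces r z = r x * r y, so by
   faithfulness the third point of a line is determined by the product of the
   generators of the other two.  As r a * r b * r c = 1 makes each of r a, r b,
   r c the product of the other two, if two of a, b, c are collinear then the
   third one completes their line.
   Otherwise let d be non-collinear with a, b and c, and let l be a line through
   d.  The feet of a, b, c on l lie among the two points of l other than d, so
   some z is collinear with two of them, say a and b, via lines {z, a, a'} and
   {z, b, b'}.  If c were not collinear with z, it would be collinear with a';
   the third point of the line through a' and c has generator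
   r z * r a * r c = r z * r b, so it is b', and z would be collinear with two
   points of a line missing z.  Hence z is collinear with the four pairwise
   non-collinear points a, b, c, d, which needs four lines through z.  This only
   uses t <= 2. *)

Lemma card_set3 (T : finType) (x y z : T) :
  x != y -> y != z -> x != z -> #|[set x; y; z]| = 3.
Proof.
move=> xy yz xz; rewrite -setUA cardsU1 cards2 !inE.
by rewrite (negbTE xy) (negbTE xz) yz.
Qed.

Lemma card_le2_pigeonhole (T : finType) (A : {set T}) (x y z : T) :
  #|A| <= 2 -> x \in A -> y \in A -> z \in A -> [|| x == y, y == z | x == z].
Proof.
move=> A_le2 xA yA zA; apply/negPn/negP; rewrite !negb_or => /and3P[xy yz xz].
have : [set x; y; z] \subset A by apply/subsetP => u; rewrite !inE => /orP[/orP[]|]/eqP->.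
by move/subset_leq_card; rewrite card_set3 // => /leq_trans/(_ A_le2).
Qed.

Section InvolutionGroups.
Variable gT : finGroupType.
Local Open Scope group_scope.

Lemma involution_mul3 (x y z : gT) :
  x ^+ 2 = 1 -> z ^+ 2 = 1 -> x * y * z = 1 -> [/\ x * y = z, y * z = x & x * z = y].
Proof.
move=> x2 z2 xyz.
have xV : x^-1 = x by apply/eqP; rewrite eq_invg_mul -expg2 x2.
have zV : z^-1 = z by apply/eqP; rewrite eq_invg_mul -expg2 z2.
have xy : x * y = z by rewrite -zV; apply/eqP; rewrite eq_mulgV1 invgK xyz.
split=> //; last by rewrite -xy mulgA -expg2 x2 mul1g.
by rewrite -xV -[y * z](mulKg x) (mulgA x) xyz mulg1.
Qed.

Lemma klein_four_mul (x y z : gT) : klein_four [set 1; x; y; z] -> x * y = z.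
Proof.
case/and3P=> /group_setP[_ mulA] /eqP cardA /forall_inP sqA.
have : uniq [:: 1; x; y; z].
  by apply/card_uniqP; rewrite [size _]/= -cardA; apply: eq_card => u; rewrite !inE !orbA.
rewrite /= !inE !negb_or => /and4P[/and3P[n1x n1y _] /andP[nxy _] _ _].
have y2 : y * y = 1 by apply/eqP; rewrite -expg2 sqA // !inE eqxx !orbT.
have /mulA : x \in [set 1; x; y; z] by rewrite !inE eqxx !orbT.
move/(_ y); rewrite !inE eqxx !orbT -!orbA => /(_ isT) /or4P[] /eqP xy_eq //.
- by move: nxy; rewrite -[x]mulg1 -y2 mulgA xy_eq mul1g eqxx.
- by move: n1y; rewrite -[y](mulKg x) xy_eq mulVg eqxx.
- by move: n1x; rewrite -[x]mulg1 -(mulgV y) mulgA xy_eq mulgV eqxx.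
Qed.

End InvolutionGroups.

Section Incidence.
Variables (P : finType) (L : {set {set P}}).

Lemma collinearP x y :
  reflect (exists l, [/\ l \in L, x \in l & y \in l]) (collinear L x y).
Proof.
apply: (iffP existsP) => [[l /and3P[]] | [l [lL xl yl]]]; first by exists l.
by exists l; rewrite lL xl yl.
Qed.

Lemma collinearC x y : collinear L x y = collinear L y x.
Proof. by apply/collinearP/collinearP => -[l [lL xl yl]]; exists l. Qed.

(* Plain [arc] would denote the arc of a cycle from path.v. *)
Lemma arcP (A : {set P}) :
  reflect {in A &, forall x y, x != y -> ~~ collinear L x y} (Defs.arc L A).
Proof.
apply: (iffP forall_inP) => [arcA x y xA yA | arcA x xA].
  by move/forall_inP/(_ y yA)/implyP: (arcA x xA).
by apply/forall_inP => y yA; apply/implyP; apply: arcA.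
Qed.

Lemma arc_card_le_lines z (A : {set P}) :
  Defs.arc L A -> {in A, forall x, collinear L z x} -> #|A| <= #|[set l in L | z \in l]|.
Proof.
move=> /arcP arcA zA.
pose line_to x := odflt set0 [pick l in L | (z \in l) && (x \in l)].
have line_toP x : x \in A -> [/\ line_to x \in L, z \in line_to x & x \in line_to x].
  move=> xA; rewrite /line_to; case: pickP => [l /andP[lL /andP[zl xl]] | no_line] //=.
  by have /collinearP[l [lL zl xl]] := zA x xA; move: (no_line l); rewrite lL zl xl.
have line_to_inj : {in A &, injective line_to}.
  move=> x y xA yA lxy; apply/eqP/(contraTT (arcA x y xA yA)).
  have [lL _ xl] := line_toP x xA; have [_ _ yl] := line_toP y yA.
  by apply/collinearP; exists (line_to x); split; rewrite // lxy.
rewrite -(card_in_imset line_to_inj); apply: subset_leq_card.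
by apply/subsetP => _ /imsetP[x xA ->]; have [lL zl _] := line_toP x xA; rewrite inE lL.
Qed.

End Incidence.

Section RepresentedQuadrangle.
Variables (P : finType) (L : {set {set P}}) (gT : finGroupType) (r : P -> gT).
Local Open Scope group_scope.

Hypothesis line_card : forall l, l \in L -> #|l| = 3.
Hypothesis line_unique : forall x y l m, x != y -> l \in L -> m \in L ->
  x \in l -> y \in l -> x \in m -> y \in m -> l = m.
Hypothesis gq_axiom : forall x l, l \in L -> x \notin l ->
  #|[set y in l | collinear L x y]| = 1%N.
Hypothesis r_sq : forall x, r x ^+ 2 = 1.
Hypothesis r_inj : injective r.
Hypothesis r_line : forall x y z, [set x; y; z] \in L -> x != y -> y != z -> x != z ->
  klein_four [set 1; r x; r y; r z].

Lemma notin_line_ncollinear l x y :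
  l \in L -> y \in l -> ~~ collinear L x y -> x \notin l.
Proof. by move=> lL yl; apply: contra => xl; apply/collinearP; exists l. Qed.

Lemma collinear_on_line l x :
  l \in L -> x \notin l -> exists2 y, y \in l & collinear L x y.
Proof.
move=> lL xl; have /card_gt0P[y] : 0 < #|[set y in l | collinear L x y]|.
  by rewrite gq_axiom.
by rewrite inE => /andP[]; exists y.
Qed.

Lemma collinear_on_line_unique l x y1 y2 : l \in L -> x \notin l ->
  y1 \in l -> y2 \in l -> collinear L x y1 -> collinear L x y2 -> y1 = y2.
Proof.
move=> lL xl y1l y2l xy1 xy2.
have /cards1P[y lxE] : #|[set y in l | collinear L x y]| == 1%N by rewrite gq_axiom.
have : y1 \in [set y in l | collinear L x y] by rewrite inE y1l.
have : y2 \in [set y in l | collinear L x y] by rewrite inE y2l.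
by rewrite lxE !inE => /eqP-> /eqP->.
Qed.

Lemma line_third_point l x y : l \in L -> x \in l -> y \in l -> x != y ->
  exists w, [/\ l = [set x; y; w], x != w, y != w & r w = r x * r y].
Proof.
move=> lL xl yl xy.
have /subsetPn[w wl] : ~~ (l \subset [set x; y]).
  by apply/negP => /subset_leq_card; rewrite line_card // cards2 xy.
rewrite !inE negb_or ![w == _]eq_sym => /andP[xw yw].
have lE : l = [set x; y; w].
  apply/eqP; rewrite eq_sym eqEcard card_set3 // line_card // leqnn andbT.
  by apply/subsetP => u; rewrite !inE => /orP[/orP[]|]/eqP->.
by exists w; split=> //; apply/esym/klein_four_mul/r_line; rewrite -?lE.
Qed.

Lemma collinear_mul_line x y z :
  collinear L x y -> x != y -> r x * r y = r z -> [set x; y; z] \in L.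
Proof.
case/collinearP=> l [lL xl yl] xy rxyz.
have [w [lE _ _ rw]] := line_third_point lL xl yl xy.
by rewrite -(r_inj (etrans rw rxyz)) -lE.
Qed.

Lemma collinear_third u v w z :
  ~~ collinear L u v -> ~~ collinear L u w -> r u * r v = r w ->
  collinear L z u -> collinear L z v -> z != u -> z != v -> collinear L z w.
Proof.
move=> nuv nuw ruvw /collinearP[lu [luL zlu ulu]] /collinearP[lv [lvL zlv vlv]] zu zv.
apply: contraT => nzw.
have [u' [luE zu' _ ru']] := line_third_point luL zlu ulu zu.
have [v' [lvE zv' _ rv']] := line_third_point lvL zlv vlv zv.
have u'lu : u' \in lu by rewrite luE !inE eqxx orbT.
have v'lv : v' \in lv by rewrite lvE !inE eqxx orbT.
have wlu : w \notin lu by apply: (notin_line_ncollinear luL ulu); rewrite collinearC.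
have u'w : collinear L u' w.
  have [y ylu wy] := collinear_on_line luL wlu.
  move: ylu wy; rewrite luE !inE collinearC => /orP[/orP[]|] /eqP->.
  - by rewrite (negbTE nzw).
  - by rewrite (negbTE nuw).
  - by [].
have /collinearP[m [mL u'm wm]] := u'w.
have u'_neq_w : u' != w by apply: contraNneq wlu => <-.
have [v'' [mE _ _ rv'']] := line_third_point mL u'm wm u'_neq_w.
have v''E : v'' = v'.
  by apply: r_inj; rewrite rv'' ru' rv' -mulgA -ruvw (mulgA (r u)) -expg2 r_sq mul1g.
have v'm : v' \in m by rewrite -v''E mE !inE eqxx orbT.
have u'v' : u' != v'.
  apply: contraNneq nuv => u'v'.
  have lulv : lu = lv by apply: (line_unique zu' luL lvL zlu u'lu zlv); rewrite u'v'.
  by apply/collinearP; exists lu; split; rewrite // lulv.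
have zm : z \notin m.
  rewrite mE v''E !inE (negbTE zu') (negbTE zv') orbF /=.
  by apply: contraNneq wlu => <-.
have zu'_col : collinear L z u' by apply/collinearP; exists lu.
have zv'_col : collinear L z v' by apply/collinearP; exists lv.
by rewrite (collinear_on_line_unique mL zm u'm v'm zu'_col zv'_col) eqxx in u'v'.
Qed.

Section Triangle.
Variables a b c : P.
Hypotheses (nab : ~~ collinear L a b) (nbc : ~~ collinear L b c).
Hypotheses (nac : ~~ collinear L a c) (rabc : r a * r b * r c = 1).

Lemma triangle_line_meet l d :
  l \in L -> d \in l -> ~~ collinear L d a -> ~~ collinear L d b -> ~~ collinear L d c ->
  exists2 z, z \in l & {in [set a; b; c], forall x, collinear L z x}.
Proof.
move=> lL dl nda ndb ndc.
have [rab rbc rac] := involution_mul3 (r_sq a) (r_sq c) rabc.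
have foot x : ~~ collinear L d x ->
    exists2 q, q \in l :\ d & collinear L q x && (q != x).
  move=> ndx; have xl : x \notin l.
    by apply: (notin_line_ncollinear lL dl); rewrite collinearC.
  have [q ql xq] := collinear_on_line lL xl.
  exists q; last by rewrite collinearC xq; apply: contraNneq xl => <-.
  by rewrite !inE ql andbT; apply: contraNneq ndx => <-; rewrite collinearC.
have [qa qaE /andP[qa_a qaa]] := foot a nda.
have [qb qbE /andP[qb_b qbb]] := foot b ndb.
have [qc qcE /andP[qc_c qcc]] := foot c ndc.
have ld_le2 : #|l :\ d| <= 2 by move: (cardsD1 d l); rewrite dl line_card // add1n => -[<-].
case/or3P: (card_le2_pigeonhole ld_le2 qaE qbE qcE) => /eqP qE.
- exists qa; first by case/setD1P: qaE.
  move=> x; rewrite !inE => /orP[/orP[]|] /eqP-> //; first by rewrite qE.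
  by apply: (collinear_third nab nac rab) => //; rewrite qE.
- exists qb; first by case/setD1P: qbE.
  move=> x; rewrite !inE => /orP[/orP[]|] /eqP-> //; last by rewrite qE.
  by apply: (collinear_third nbc _ rbc) => //; rewrite ?qE // collinearC.
- exists qa; first by case/setD1P: qaE.
  move=> x; rewrite !inE => /orP[/orP[]|] /eqP-> //; last by rewrite qE.
  by apply: (collinear_third nac nab rac) => //; rewrite qE.
Qed.

Lemma triangle_complete_arc t :
  (forall x, #|[set l in L | x \in l]| = t.+1) -> t <= 2 ->
  a != b -> b != c -> a != c -> complete_karc L 3 [set a; b; c].
Proof.
move=> lines_t t_le2 ab bc ac.
have abc_arc : Defs.arc L [set a; b; c].
  apply/arcP => x y; rewrite !inE => /orP[/orP[]|]/eqP-> /orP[/orP[]|]/eqP->;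
  by rewrite ?eqxx // => _; rewrite // collinearC.
rewrite /complete_karc /karc abc_arc card_set3 //=.
apply/negP => /existsP[B /andP[/andP[arcB /eqP cardB] abcB]].
have /subsetPn[d dB dabc] : ~~ (B \subset [set a; b; c]).
  by apply/negP => /subset_leq_card; rewrite cardB card_set3.
have BE : B = d |: [set a; b; c].
  apply/eqP; rewrite eq_sym eqEcard subUset sub1set dB abcB.
  by rewrite cardsU1 dabc card_set3 // cardB.
have nd x : x \in [set a; b; c] -> ~~ collinear L d x.
  move=> xabc; apply: (arcP _ _ arcB) => //; first exact: (subsetP abcB).
  by apply: contraNneq dabc => ->.
have [nda ndb ndc] : [/\ ~~ collinear L d a, ~~ collinear L d b & ~~ collinear L d c].
  by split; apply: nd; rewrite !inE eqxx ?orbT.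
have /card_gt0P[l] : 0 < #|[set l in L | d \in l]| by rewrite lines_t.
rewrite inE => /andP[lL dl].
have [z zl zabc] := triangle_line_meet lL dl nda ndb ndc.
have : #|B| <= #|[set l in L | z \in l]|.
  apply: arc_card_le_lines arcB _ => x; rewrite BE => /setU1P[-> | /zabc //].
  by apply/collinearP; exists l.
by rewrite cardB lines_t ltnS leqNgt ltnS t_le2.
Qed.

End Triangle.

End RepresentedQuadrangle.

Theorem trivial_product_line_or_complete_arc t (P : finType) (L : {set {set P}})
  (gT : finGroupType) (R : {group gT}) (r : P -> gT) (a b c : P) :
  is_GQ2 L t -> t <= 2 -> representation L R r -> faithful_rep r ->
  a != b -> b != c -> a != c -> (r a * r b * r c = 1)%g ->
  [set a; b; c] \in L \/ complete_karc L 3 [set a; b; c].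
Proof.
case=> -[_ line_unique] line_card lines_t _ gq_axiom t_le2 [r_ord _ r_line] faithful.
move=> ab bc ac rabc.
have r_sq x : (r x ^+ 2 = 1)%g by rewrite -(r_ord x) expg_order.
have r_inj : injective r by move=> x y rxy; apply: faithful; rewrite /= rxy.
have [rab rbc rac] := involution_mul3 (r_sq a) (r_sq c) rabc.
have line_of := collinear_mul_line line_card r_inj r_line.
have [ab_col | nab] := boolP (collinear L a b).
  by left; apply: line_of ab_col ab rab.
have [bc_col | nbc] := boolP (collinear L b c).
  by left; rewrite -setUA setUC; apply: line_of bc_col bc rbc.
have [ac_col | nac] := boolP (collinear L a c).
  by left; rewrite setUAC; apply: line_of ac_col ac rac.
by right; apply: (triangle_complete_arc line_card line_unique gq_axiom r_sq r_inj r_line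
  nab nbc nac rabc lines_t).
Qed.

Theorem corollary3p6 (P : finType) (L : {set {set P}}) (gT : finGroupType)
  (R : {group gT}) (r : P -> gT) (a b c : P) :
  is_GQ2 L 2 ->
  representation L R r ->
  faithful_rep r ->
  #|R| = 2 ^ 4 ->
  a != b -> b != c -> a != c ->
  (r a * r b * r c = 1)%g ->
  [set a; b; c] \in L \/ complete_karc L 3 [set a; b; c].
Proof.
by move=> gq rep faithful _; apply: (trivial_product_line_or_complete_arc gq _ rep faithful).
Qed.
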